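(* For integers $0\le\ell\le 2n$ and $m\ge0$, let $p_{\ell,m,2n}$ be the weighted number of paths from $(\ell,m)$ to $(2n,0)$. Then \[ \frac{p_{\ell,j,2n}}{j+1}\ge\frac{p_{\ell,k,2n}}{k+1} \] for all integers $0\le j<k\le\ell\le 2n$ with $k-j$ even.
   Context: Paths here use up steps $U=(1,1)$ and down steps $D=(1,-1)$ and never go below $y=0$. An up step starting at $(a,b)$ has weight $(a-b+2)/(a+b+2)$; the weight of a path is the product of the weights of its up steps, and $p_{\ell,m,2n}$ is the sum of the weights of all such paths from $(\ell,m)$ to $(2n,0)$. Equivalently, $p_{2n,m,2n}=\delta_{m,0}$, $p_{\ell,-1,2n}=0$, and $p_{\ell,m,2n}=p_{\ell+1,m-1,2n}+\frac{\ell-m+2}{\ell+m+2}p_{\ell+1,m+1,2n}$ for $\ell<2n$, $m\ge0$. *)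

From mathcomp Require Import all_boot all_order all_algebra.
Set Implicit Arguments. Unset Strict Implicit. Unset Printing Implicit Defensive.
Import Order.TTheory GRing.Theory Num.Theory.
Local Open Scope ring_scope.

Definition upw (a b : nat) : rat :=
  ((Posz a - Posz b + 2)%:~R) / ((a + b + 2)%N%:R).

(* pathsum r l m : weighted number of paths from (l,m) to (l+r,0),
   by recursion on the number r of remaining steps. *)
Fixpoint pathsum (r l m : nat) : rat :=
  match r with
  | 0 => if m == 0%N then 1 else 0
  | r'.+1 =>
      (if m is m'.+1 then pathsum r' l.+1 m' else 0)
      + upw l m * pathsum r' l.+1 m.+1
  end.

Definition p (l m N : nat) : rat := pathsum (N - l) l m.

(* Put q_m := p_{l,m,2n} / (m+1); it suffices to show q_{m+2} <= q_m whenever m + 2 <= l, by induction on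
   the number 2n - l of remaining steps.  One step of the recursion expresses q_m and q_{m+2} at column l
   through the values at column l+1 at heights m-1, m+1, m+3.  The induction hypothesis at column l+1
   gives q_{m+3} <= q_{m+1} and m q_{m+1} <= p_{m-1}, and what remains is an inequality between rational
   functions of l and m which, once the denominators are cleared, has manifestly nonnegative coefficients. *)

Set Warnings "-notation-overridden -ambiguous-paths".
From mathcomp Require Import all_boot all_order all_algebra.
From mathcomp Require Import ring lra zify.
Import Order.TTheory GRing.Theory Num.Theory.
Local Open Scope ring_scope.

Lemma column_step_ineq (R : realFieldType) (L M x z y : R) :
  0 <= M -> M + 2 <= L -> 0 <= z -> z <= x -> M * x <= y ->
  ((M + 2) * x + (L - M) / (L + M + 4) * ((M + 4) * z)) / (M + 3)
  <= (y + (L - M + 2) / (L + M + 2) * ((M + 2) * x)) / (M + 1).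
Proof.
move=> M_ge0 ML z_ge0 zx Mxy.
apply: le_trans
  (_ : _ <= (M * x + (L - M + 2) / (L + M + 2) * ((M + 2) * x)) / (M + 1)) _; last first.
  by apply: ler_wpM2r; [rewrite invr_ge0; lra | rewrite lerD2r].
rewrite -subr_ge0.
have -> : (M * x + (L - M + 2) / (L + M + 2) * ((M + 2) * x)) / (M + 1)
    - ((M + 2) * x + (L - M) / (L + M + 4) * ((M + 4) * z)) / (M + 3)
  = ((L + M + 4) * (4 * (M + 2) ^+ 2 + (L - M - 2) * (M + 1) * (M + 4)) * (x - z)
     + 4 * ((L + 1) * (M + 1) * (M + 3) + 2 * M + L + 5) * z)
    / ((M + 1) * (M + 3) * (L + M + 2) * (L + M + 4)).
  by field; rewrite !gt_eqF //; lra.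
by do ![ lra | apply: mulr_ge0 | apply: addr_ge0 | apply: exprn_ge0 | apply: divr_ge0
        | rewrite invr_ge0 ].
Qed.

Lemma upwE a b : upw a b = (a%:R - b%:R + 2) / (a%:R + b%:R + 2).
Proof. by rewrite /upw intrD intrB !natrD. Qed.

Lemma upw_ge0 a b : (b <= a.+2)%N -> 0 <= upw a b.
Proof.
rewrite -addn2 -(ler_nat rat) natrD upwE => ba.
have a_ge0 := ler0n rat a; have b_ge0 := ler0n rat b.
by apply: divr_ge0; lra.
Qed.

Lemma pathsum_ge0 r l m : (m <= l.+2)%N -> 0 <= pathsum r l m.
Proof.
elim: r l m => [|r IHr] l m ml /=; first by case: (m == 0%N).
apply: addr_ge0; first by case: m ml => [|m] ml //; apply: IHr; lia.
by apply: mulr_ge0; [apply: upw_ge0 | apply: IHr; lia].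
Qed.

Definition pathratio r l m := pathsum r l m / m.+1%:R.

Lemma pathratioK r l m : m.+1%:R * pathratio r l m = pathsum r l m.
Proof. by rewrite mulrC divfK ?pnatr_eq0. Qed.

Lemma pathratio_ge0 r l m : (m <= l.+2)%N -> 0 <= pathratio r l m.
Proof. by move=> ml; rewrite divr_ge0 ?pathsum_ge0. Qed.

Lemma pathratio_leS2 r l m : (m.+2 <= l)%N -> pathratio r l m.+2 <= pathratio r l m.
Proof.
elim: r l m => [|r IHr] l m ml.
  by rewrite /pathratio /= mul0r divr_ge0 //; case: (m == 0%N).
set y := if m is m'.+1 then pathsum r l.+1 m' else 0.
have Mxy : m%:R * pathratio r l.+1 m.+1 <= y.
  case: m ml @y => [|m'] ml; first by rewrite mul0r.
  rewrite /= -pathratioK; apply: ler_wpM2l => //; apply: IHr; lia.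
have -> : pathratio r.+1 l m.+2
  = (m.+2%:R * pathratio r l.+1 m.+1 + upw l m.+2 * (m.+4%:R * pathratio r l.+1 m.+3))
    / m.+3%:R by rewrite !pathratioK.
have -> : pathratio r.+1 l m
  = (y + upw l m * (m.+2%:R * pathratio r l.+1 m.+1)) / m.+1%:R by rewrite pathratioK.
set x := pathratio r l.+1 m.+1; set z := pathratio r l.+1 m.+3.
rewrite !upwE -[m.+4]addn4 -[m.+3]addn3 -[m.+2]addn2 -[m.+1]addn1 !natrD.
have -> : l%:R - (m%:R + 2) + 2 = l%:R - m%:R :> rat by ring.
have -> : l%:R + (m%:R + 2) + 2 = l%:R + m%:R + 4 :> rat by ring.
apply: column_step_ineq => //.
- by move: ml; rewrite -addn2 -(ler_nat rat) natrD.
- by apply: pathratio_ge0; lia.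
- by apply: IHr; lia.
Qed.

Lemma pathratio_le_even r l j t : (j + 2 * t <= l)%N ->
  pathratio r l (j + 2 * t) <= pathratio r l j.
Proof.
elim: t => [|t IHt] jtl; first by rewrite muln0 addn0.
rewrite (_ : j + 2 * t.+1 = (j + 2 * t).+2)%N; last by lia.
by apply: le_trans (pathratio_leS2 r l _ _) (IHt _); lia.
Qed.

Theorem lemma4p5 (n l j k : nat) :
  (j < k)%N -> (k <= l)%N -> (l <= 2 * n)%N -> ~~ odd (k - j) ->
  p l k (2 * n) / (k.+1)%:R <= p l j (2 * n) / (j.+1)%:R.
Proof.
move=> jk kl _ even_kj.
have [t k_eq] : exists t, k = (j + 2 * t)%N.
  by exists (k - j)./2; move: (odd_double_half (k - j)); rewrite (negbTE even_kj) -muln2; lia.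
by rewrite k_eq in kl *; apply: pathratio_le_even.
Qed.
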